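(* If $f(x_1,\ldots,x_n)$ is a Chow function, then every restriction of $f$ (obtained by fixing some of its variables to constants) is a Chow function.
   Context: The Chow parameters of a Boolean function $f(x_1,\ldots,x_n)$ are $(w_1(f),\ldots,w_n(f),w(f))$, where $w(f)$ is the number of true points and $w_i(f)$ the number of true points with $x_i=1$. $f$ is a Chow function if no other Boolean function of the same variables has the same Chow parameters. A restriction of $f$ is a function $f_{|x_{i_1}=\alpha_1,\ldots,x_{i_k}=\alpha_k}$ of the remaining variables obtained by fixing $x_{i_j}=\alpha_j\in\{0,1\}$. *)

From HB Require Import structures.
From mathcomp Require Import all_boot.
Set Implicit Arguments. Unset Strict Implicit. Unset Printing Implicit Defensive.

Definition boolfun (I : finType) := {ffun {ffun I -> bool} -> bool}.

Definition chow_w (I : finType) (f : boolfun I) : nat := #|[set x | f x]|.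
Definition chow_wi (I : finType) (f : boolfun I) (i : I) : nat :=
  #|[set x | f x && x i]|.

Definition chow_function (I : finType) (f : boolfun I) : Prop :=
  forall g : boolfun I,
    (forall i, chow_wi g i = chow_wi f i) -> chow_w g = chow_w f -> g = f.

Definition rest_vars (I : finType) (S : {set I}) : finType :=
  {i : I | i \notin S}.

Definition extend_assign (I : finType) (S : {set I}) (alpha : {ffun I -> bool})
  (y : {ffun rest_vars S -> bool}) : {ffun I -> bool} :=
  [ffun i => match (insub i : option (rest_vars S)) with
             | Some j => y j
             | None => alpha i
             end].

Definition restriction (I : finType) (f : boolfun I) (S : {set I})
  (alpha : {ffun I -> bool}) : boolfun (rest_vars S) :=
  [ffun y => f (@extend_assign I S alpha y)].

From mathcomp Require Import all_boot.
Set Implicit Arguments. Unset Strict Implicit. Unset Printing Implicit Defensive.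

(* Let g have the same Chow parameters as the restriction f_{|S = alpha}.
   Patch f by replacing its values on the subcube {x | x = alpha on S} by
   those of g.  Every Chow parameter counts true points, and it splits into
   the count inside the subcube, which is a Chow parameter of the restriction
   (or 0), and the count outside, which the patch does not change.  Hence the
   patched function has the Chow parameters of f, so it equals f because f is
   a Chow function, and restricting both sides gives g = f_{|S = alpha}. *)

Section Subcube.
Variables (I : finType) (S : {set I}) (alpha : {ffun I -> bool}).

Local Notation cube := {ffun I -> bool}.
Local Notation rcube := {ffun rest_vars S -> bool}.
Local Notation extend := (@extend_assign I S alpha).

Definition subcube : {set cube} :=
  [set x : cube | [forall i in S, x i == alpha i]].

Definition project (x : cube) : rcube := [ffun j => x (val j)].

Lemma extend_assign_val (y : rcube) (j : rest_vars S) : extend y (val j) = y j.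
Proof. by rewrite ffunE valK. Qed.

Lemma extend_assign_fixed (y : rcube) (i : I) : i \in S -> extend y i = alpha i.
Proof. by move=> Si; rewrite ffunE; case: insubP => // j; rewrite /= Si. Qed.

Lemma extend_assignK : cancel extend project.
Proof. by move=> y; apply/ffunP => j; rewrite ffunE extend_assign_val. Qed.

Lemma extend_assign_inj : injective extend.
Proof. exact: can_inj extend_assignK. Qed.

Lemma extend_assign_subcube (y : rcube) : extend y \in subcube.
Proof. by rewrite inE; apply/forall_inP => i Si; rewrite extend_assign_fixed. Qed.

Lemma projectK : {in subcube, cancel project extend}.
Proof.
move=> x; rewrite inE => /forall_inP x_alpha; apply/ffunP => i.
rewrite ffunE; case: insubP => [j _ <-|]; first by rewrite ffunE.
by rewrite negbK => Si; rewrite (eqP (x_alpha i Si)).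
Qed.

Lemma card_subcube (P : pred cube) :
  #|[set x | P x] :&: subcube| = #|[set y | P (extend y)]|.
Proof.
rewrite -(card_imset _ extend_assign_inj); apply: eq_card => x.
rewrite in_setI inE; apply/andP/imsetP => [[Px x_sub] | [y]].
  by exists (project x); rewrite ?inE projectK.
by rewrite inE => Py ->; split; last exact: extend_assign_subcube.
Qed.

Definition patch (g : boolfun (rest_vars S)) (f : boolfun I) : boolfun I :=
  [ffun x => if x \in subcube then g (project x) else f x].

Variables (f : boolfun I) (g : boolfun (rest_vars S)).

Lemma restriction_patch : restriction (patch g f) S alpha = g.
Proof.
by apply/ffunP => y; rewrite !ffunE extend_assign_subcube extend_assignK.
Qed.

Lemma card_patch (P : pred cube) :
    #|[set y | g y && P (extend y)]| =
    #|[set y | restriction f S alpha y && P (extend y)]| ->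
  #|[set x | patch g f x && P x]| = #|[set x | f x && P x]|.
Proof.
move=> eq_sub.
rewrite -(cardsID subcube [set x | patch g f x && P x]).
rewrite -(cardsID subcube [set x | f x && P x]) !card_subcube.
congr addn.
  transitivity #|[set y | g y && P (extend y)]|.
    by apply: eq_card => y; rewrite !inE ffunE extend_assign_subcube extend_assignK.
  by rewrite eq_sub; apply: eq_card => y; rewrite !inE ffunE.
apply: eq_card => x; rewrite !in_setD.
have [//|x_out] := boolP (x \in subcube).
by rewrite !inE ffunE (negbTE x_out).
Qed.

Hypothesis g_chow_w : chow_w g = chow_w (restriction f S alpha).
Hypothesis g_chow_wi :
  forall j, chow_wi g j = chow_wi (restriction f S alpha) j.

Lemma chow_w_patch : chow_w (patch g f) = chow_w f.
Proof.
have card_andbT (T : finType) (h : pred T) :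
    #|[set x | h x && true]| = #|[set x | h x]|.
  by apply: eq_card => x; rewrite !inE andbT.
have := card_patch (P := predT); rewrite /= !card_andbT; apply.
exact: g_chow_w.
Qed.

Lemma chow_wi_patch (i : I) : chow_wi (patch g f) i = chow_wi f i.
Proof.
apply: (card_patch (P := fun x => x i)).
have [Si | S'i] := boolP (i \in S).
  have card_fixed (h : pred rcube) :
      #|[set y | h y && extend y i]| = #|[set y | h y && alpha i]|.
    by apply: eq_card => y; rewrite !inE extend_assign_fixed.
  rewrite !card_fixed; case: (alpha i); last first.
    by apply: eq_card => y; rewrite !inE !andbF.
  by apply: etrans (etrans _ g_chow_w) _; apply: eq_card => y; rewrite !inE andbT.
pose j : rest_vars S := exist _ i S'i.
apply: etrans (etrans _ (g_chow_wi j)) _;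
  by apply: eq_card => y; rewrite !inE (extend_assign_val y j).
Qed.

End Subcube.

Theorem chow_function_restriction (I : finType) (f : boolfun I)
    (S : {set I}) (alpha : {ffun I -> bool}) :
  chow_function f -> chow_function (restriction f S alpha).
Proof.
move=> f_chow g g_chow_wi g_chow_w.
have patch_f : patch alpha g f = f.
  by apply: f_chow; [exact: chow_wi_patch | exact: chow_w_patch].
by rewrite -patch_f restriction_patch.
Qed.

Theorem mainTheorem13 (n : nat) (f : boolfun 'I_n) :
  chow_function f ->
  forall (S : {set 'I_n}) (alpha : {ffun 'I_n -> bool}),
    chow_function (restriction f S alpha).
Proof. by move=> f_chow S alpha; exact: chow_function_restriction. Qed.
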